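(* Let $q$ be a prime power and $n$ a positive integer, and let $U,V$ be two distinct $\mathbb{F}_q$-subspaces of $\mathbb{F}_{q^n}$ such that $U\cap V=\{0\}$ and $\dim(U\cap\alpha V)\leq 1$ for every $\alpha\in\mathbb{F}_{q^n}^*$. If $$\mathbb{F}_q+(U+V)+UV=\mathbb{F}_q\oplus(U+V)\oplus UV,$$ then $\dim\big((\mathbb{F}_q+U)\cap\alpha(\mathbb{F}_q+V)\big)\leq 1$ for every $\alpha\in\mathbb{F}_{q^n}^*$.
   Context: All subspaces are $\mathbb{F}_q$-subspaces of $\mathbb{F}_{q^n}$, with $\mathbb{F}_q\subseteq\mathbb{F}_{q^n}$ the prime-power subfield. For subspaces $U,V$: $U+V=\{u+v\mid u\in U,v\in V\}$, $UV$ is the $\mathbb{F}_q$-span of $\{uv\mid u\in U,v\in V\}$, and $\oplus$ denotes that the sum is direct. *)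

From HB Require Import structures.
From mathcomp Require Import all_boot all_order all_algebra all_field.
Set Implicit Arguments. Unset Strict Implicit. Unset Printing Implicit Defensive.
Import GRing.Theory.
Local Open Scope ring_scope.

Definition Fq_sub (F : finFieldType) (L : fieldExtType F) : {vspace L} := 1%VS.

Definition scalev (F : finFieldType) (L : fieldExtType F) (a : L) (V : {vspace L})
  : {vspace L} := (<[a]> * V)%VS.

(* We spell it out
   because directv would syntactically split the middle block U + V. *)
Definition directv3 (F : finFieldType) (L : fieldExtType F) (A B C : {vspace L})
  : bool := \dim (A + B + C)%VS == (\dim A + \dim B + \dim C)%N.

Lemma directv3E (F : finFieldType) (L : fieldExtType F) (A B C : {vspace L}) :
  directv3 A B C = directv (A + B + C)%VS.
Proof. by rewrite /directv3 directvE. Qed.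

(* An element of (F_q + U) ∩ α(F_q + V) is x = k + u = α(m + v) with k, m in
   F_q, u in U, v in V.  For two such elements x1, x2 the identity
   x1 (m2 + v2) = α (m1 + v1)(m2 + v2) = x2 (m1 + v1) yields
   (k1 + u1)(m2 + v2) = (k2 + u2)(m1 + v1).  Expanding both sides and comparing
   components in F_q ⊕ (U + V) ⊕ UV, and then in U ⊕ V, gives
   k1 m2 = k2 m1, k1 v2 = k2 v1 and m2 u1 = m1 u2, hence k1 x2 = k2 x1 and
   m1 x2 = m2 x1.  So as soon as x1 is not in U ∩ αV (i.e. k1 or m1 is nonzero)
   every x2 is an F_q-multiple of x1; otherwise the whole intersection lies in
   U ∩ αV, which has dimension at most 1 by hypothesis. *)

From HB Require Import structures.
From mathcomp Require Import all_boot all_order all_algebra all_field.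
Local Open Scope ring_scope.
Import GRing.Theory.

Section SubspaceProducts.
Variables (F : finFieldType) (L : fieldExtType F).
Implicit Types (A B C U W S : {vspace L}) (x y : L).

Lemma directv3_unique {A B C a1 a2 b1 b2 c1 c2} :
  directv3 A B C ->
  a1 \in A -> a2 \in A -> b1 \in B -> b2 \in B -> c1 \in C -> c2 \in C ->
  a1 + b1 + c1 = a2 + b2 + c2 -> [/\ a1 = a2, b1 = b2 & c1 = c2].
Proof.
rewrite directv3E directv_addE directv_trivial => /and3P[dirAB _ /eqP capABC].
have /directv_add_unique uniqABC := introT directv_addP capABC.
have /directv_add_unique uniqAB := dirAB.
move=> Aa1 Aa2 Bb1 Bb2 Cc1 Cc2 /eqP.
rewrite uniqABC ?memv_add // => /eqP[/eqP].
by rewrite uniqAB // => /eqP[-> ->] ->.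
Qed.

Lemma mulr_alg_add k m x y :
  (k%:A + x) * (m%:A + y) = (k * m)%:A + (k *: y + m *: x) + x * y.
Proof.
by rewrite mulrDl !mulrDr !mulr_algl mulr_algr scalerA !addrA.
Qed.

Lemma memv_add1P U x : reflect (exists k, exists2 u, u \in U & x = k%:A + u)
                                (x \in 1 + U)%VS.
Proof.
apply: (iffP memv_addP).
  by case=> _ /vlineP[k ->] [u Uu ->]; exists k, u.
by case=> k [u Uu ->]; exists k%:A; [rewrite rpredZ ?memv_line | exists u].
Qed.

Lemma memv_scalevP a W x : reflect (exists2 w, w \in W & x = a * w)
                                   (x \in scalev a W).
Proof.
by rewrite /scalev prodvC; apply: (iffP memv_cosetP) => -[w Ww ->];
  exists w; rewrite // mulrC.
Qed.

Lemma dimv_leq1_lines W S :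
  (\dim S <= 1)%N ->
  (forall x y, x \in W -> x \notin S -> y \in W -> y \in <[x]>%VS) ->
  (\dim W <= 1)%N.
Proof.
move=> dimS Wlines.
have [/dimvS/leq_trans-> // | /subvPn[x Wx Sx]] := boolP (W <= S)%VS.
have /dimvS/leq_trans-> // : (W <= <[x]>)%VS by apply/subvP => y; apply: Wlines.
by rewrite dim_vline leq_b1.
Qed.

Variables U V : {vspace L}.
Hypotheses (capUV : (U :&: V = 0)%VS) (dirFUV : directv3 1 (U + V) (U * V)).

Lemma alg_add_mul_coefficients {k1 k2 m1 m2 u1 u2 v1 v2} :
  u1 \in U -> u2 \in U -> v1 \in V -> v2 \in V ->
  (k1%:A + u1) * (m2%:A + v2) = (k2%:A + u2) * (m1%:A + v1) ->
  [/\ k1 * m2 = k2 * m1, k1 *: v2 = k2 *: v1 & m2 *: u1 = m1 *: u2].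
Proof.
move=> Uu1 Uu2 Vv1 Vv2; rewrite !mulr_alg_add => eq_prod.
have memF k : k%:A \in (1%VS : {vspace L}) by rewrite rpredZ ?memv_line.
have memUV k m u v : u \in U -> v \in V -> k *: v + m *: u \in (U + V)%VS.
  by move=> Uu Vv; rewrite addrC memv_add ?memvZ.
have [/(fmorph_inj (in_alg L))-> eqUV _] :=
  directv3_unique dirFUV (memF _) (memF _)
    (memUV _ _ _ _ Uu1 Vv2) (memUV _ _ _ _ Uu2 Vv1)
    (memv_mul Uu1 Vv2) (memv_mul Uu2 Vv1) eq_prod.
have capVU : (V :&: U = 0)%VS by rewrite capvC.
have /directv_add_unique uniqVU := introT directv_addP capVU.
by move/eqP: eqUV; rewrite uniqVU ?memvZ // => /eqP[-> ->].
Qed.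

Variable a : L.
Let W := ((1 + U) :&: scalev a (1 + V))%VS.

Lemma cap_add1_scalev_decomp x :
  x \in W ->
  exists k m u v, [/\ u \in U, v \in V, x = k%:A + u & x = a * (m%:A + v)].
Proof.
case/memv_capP => /memv_add1P[k [u Uu x_u]].
by case/memv_scalevP=> _ /memv_add1P[m [v Vv ->]]; exists k, m, u, v.
Qed.

Lemma cap_add1_scalev_line x1 x2 :
  x1 \in W -> x1 \notin (U :&: scalev a V)%VS -> x2 \in W -> x2 \in <[x1]>%VS.
Proof.
move=> /cap_add1_scalev_decomp[k1 [m1 [u1 [v1 [Uu1 Vv1 x1_u x1_v]]]]] x1_out.
case/cap_add1_scalev_decomp=> [k2 [m2 [u2 [v2 [Uu2 Vv2 x2_u x2_v]]]]].
have eq_prod : (k1%:A + u1) * (m2%:A + v2) = (k2%:A + u2) * (m1%:A + v1).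
  by rewrite -x1_u -x2_u x1_v x2_v mulrAC.
have [km kv mu] := alg_add_mul_coefficients Uu1 Uu2 Vv1 Vv2 eq_prod.
have scaled_line c d : c != 0 -> c *: x2 = d *: x1 -> x2 \in <[x1]>%VS.
  move=> c0 e; apply/vlineP; exists (c^-1 * d).
  by rewrite -scalerA -e scalerA mulVf ?scale1r.
have [k0|k1_neq0] := eqVneq k1 0; last first.
  apply: (scaled_line k1 k2 k1_neq0).
  by rewrite x1_v x2_v !scalerAr !scalerDr !scalerA km kv.
have [m0|m1_neq0] := eqVneq m1 0; last first.
  apply: (scaled_line m1 m2 m1_neq0).
  by rewrite x1_u x2_u !scalerDr !scalerA [m1 * k2]mulrC [m2 * k1]mulrC km mu.
case/negP: x1_out; apply/memv_capP; split.
  by rewrite x1_u k0 scale0r add0r.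
by apply/memv_scalevP; exists v1; rewrite // x1_v m0 scale0r add0r.
Qed.

End SubspaceProducts.

Theorem lemma3p9 (F : finFieldType) (L : fieldExtType F) (U V : {vspace L}) :
  U != V ->
  (U :&: V)%VS = 0%VS ->
  (forall a : L, a != 0 -> (\dim (U :&: scalev a V) <= 1)%N) ->
  directv3 (Fq_sub L) (U + V)%VS (U * V)%VS ->
  forall a : L, a != 0 ->
    (\dim ((Fq_sub L + U) :&: scalev a (Fq_sub L + V)) <= 1)%N.
Proof.
move=> _ capUV dimUaV dirFUV a a0.
apply: dimv_leq1_lines (dimUaV a a0) _.
exact: cap_add1_scalev_line.
Qed.
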